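(* Let $\Lambda$ be a row-finite $k$-graph with no sources, and let $\{t_\lambda\}_{\lambda\in\Lambda}$ be a purely atomic representation of $C^*(\Lambda)$ on a Hilbert space $\mathcal H$, with associated projection valued measure $P$ on the Borel subsets of $\Lambda^\infty$. Then: (a) For every $\lambda\in\Lambda$ and every $\omega\in\Lambda^\infty$ with $r(\omega)=s(\lambda)$ we have $t_\lambda P(\{\omega\})t_\lambda^*=P(\{\lambda\omega\})$; and for every $\omega\in\Lambda^\infty$ and $n\in\mathbb N^k$ we have $t_{\omega(0,n)}^*P(\{\omega\})t_{\omega(0,n)}=P(\{\sigma^n(\omega)\})$. (b) For $n\in\mathbb N^k$, $\eta\in\Lambda^n$ and $\omega\in\Lambda^\infty$ with $\eta\neq\omega(0,n)$, we have $t_\eta^*P(\{\omega\})t_\eta=0$.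
   Context: A $k$-graph ($k\ge 1$) is a countable small category $\Lambda$ with a functor $d:\Lambda\to\mathbb N^k$ (the degree) satisfying the factorization property: whenever $d(\lambda)=m+n$ there are unique $\mu,\nu\in\Lambda$ with $\lambda=\mu\nu$, $d(\mu)=m$, $d(\nu)=n$. Morphisms are called paths, objects (identified with identity morphisms) form the vertex set $\Lambda^0$; $r,s$ denote range and source; $\Lambda^n=\{\lambda:d(\lambda)=n\}$ and $v\Lambda^n=\{\lambda\in\Lambda^n:r(\lambda)=v\}$. $\Lambda$ is row-finite if each $v\Lambda^n$ is finite, and has no sources if each $v\Lambda^n$ is nonempty. Let $\Omega_k$ be the $k$-graph with objects $\mathbb N^k$, morphisms $\{(p,q)\in\mathbb N^k\times\mathbb N^k:p\le q\}$, $r(p,q)=p$, $s(p,q)=q$, $d(p,q)=q-p$. An infinite path is a degree-preserving functor $x:\Omega_k\to\Lambda$; $\Lambda^\infty$ is the set of infinite paths, $r(x)=x(0,0)$, and $x(0,n)\in\Lambda^n$. The shift is $\sigma^m(x)(p,q)=x(p+m,q+m)$. For $\lambda\in\Lambda$ and $x\in\Lambda^\infty$ with $r(x)=s(\lambda)$, $\lambda x$ denotes the unique $y\in\Lambda^\infty$ with $y(0,d(\lambda))=\lambda$ and $\sigma^{d(\lambda)}(y)=x$. Cylinder sets are $Z(\lambda)=\{x\in\Lambda^\infty:x(0,d(\lambda))=\lambda\}$; they generate the Borel $\sigma$-algebra of $\Lambda^\infty$. A representation of $C^*(\Lambda)$ is a family $\{t_\lambda\}_{\lambda\in\Lambda}$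 of partial isometries on a Hilbert space with: (CK1) $\{t_v\}_{v\in\Lambda^0}$ mutually orthogonal projections; (CK2) $t_\lambda t_\eta=t_{\lambda\eta}$ when $s(\lambda)=r(\eta)$; (CK3) $t_\lambda^*t_\lambda=t_{s(\lambda)}$; (CK4) $t_v=\sum_{\lambda\in v\Lambda^n}t_\lambda t_\lambda^*$ for all $v,n$. The associated projection valued measure $P$ is the projection valued measure on the Borel sets of $\Lambda^\infty$ with $P(Z(\lambda))=t_\lambda t_\lambda^*$ for all $\lambda$. The representation is purely atomic if there is a Borel set $\Omega\subseteq\Lambda^\infty$ with $P(\Lambda^\infty\setminus\Omega)=0$, $P(\{\omega\})\ne0$ for all $\omega\in\Omega$, and $\sum_{\omega\in\Omega}P(\{\omega\})=\mathrm{Id}$ (strong operator topology). *)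

From mathcomp Require Import all_boot all_algebra.
From mathcomp Require Import all_classical all_reals all_analysis.
From mathcomp Require Import complex.
From Stdlib Require Import ClassicalEpsilon.
Set Implicit Arguments.
Unset Strict Implicit.
Unset Printing Implicit Defensive.
Import GRing.Theory Num.Theory numFieldNormedType.Exports.
Local Open Scope classical_set_scope.
Local Open Scope ring_scope.

Definition Nk (k : nat) := {ffun 'I_k -> nat}.
Definition nk0 {k} : Nk k := [ffun => 0%N].
Definition nkadd {k} (m n : Nk k) : Nk k := [ffun i => (m i + n i)%N].
Definition nksub {k} (m n : Nk k) : Nk k := [ffun i => (m i - n i)%N].
Definition nkle {k} (m n : Nk k) : bool := [forall i, m i <= n i]%N.

(* k-graphs: countable small categories with a degree functor d to N^k *)
(* satisfying the unique factorization property.  Objects (vertices)   *)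
(* are identified with identity morphisms via [kid].  The composition  *)
(* [kcomp] is total as a function but only meaningful on composable    *)
(* pairs; all axioms about it are stated only for composable pairs.    *)
Record kgraph (k : nat) := KGraph {
  kObj : countType;
  kMor : countType;
  kr : kMor -> kObj;
  ks : kMor -> kObj;
  kid : kObj -> kMor;
  kcomp : kMor -> kMor -> kMor;
  kd : kMor -> Nk k;
  kr_id : forall v, kr (kid v) = v;
  ks_id : forall v, ks (kid v) = v;
  kcomp_idl : forall l, kcomp (kid (kr l)) l = l;
  kcomp_idr : forall l, kcomp l (kid (ks l)) = l;
  kr_comp : forall l m, ks l = kr m -> kr (kcomp l m) = kr l;
  ks_comp : forall l m, ks l = kr m -> ks (kcomp l m) = ks m;
  kcompA : forall l m n, ks l = kr m -> ks m = kr n ->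
    kcomp l (kcomp m n) = kcomp (kcomp l m) n;
  kd_id : forall v, kd (kid v) = nk0;
  kd_comp : forall l m, ks l = kr m -> kd (kcomp l m) = nkadd (kd l) (kd m);
  kfactor : forall l (m n : Nk k), kd l = nkadd m n ->
    exists! mn : kMor * kMor,
      [/\ ks mn.1 = kr mn.2, l = kcomp mn.1 mn.2, kd mn.1 = m & kd mn.2 = n]
}.

Arguments kr {k L} : rename.
Arguments ks {k L} : rename.
Arguments kid {k L} : rename.
Arguments kcomp {k L} : rename.
Arguments kd {k L} : rename.

Section KGraph.
Variables (k : nat) (L : kgraph k).

Definition vLn (v : kObj L) (n : Nk k) : set (kMor L) :=
  [set l | kr l = v /\ kd l = n].

Definition row_finite := forall v n, finite_set (vLn v n).
Definition no_sources := forall v n, vLn v n !=set0.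

(* Infinite paths: degree-preserving functors Omega_k -> Lambda.
   A functor is given by its values x p q on the morphisms (p,q), p <= q,
   of Omega_k; to get a faithful type (equality = equality of functors)
   the values at pairs with ~~ (p <= q), which are not morphisms of
   Omega_k, are normalized to x p p. *)
Definition is_ipath (x : Nk k -> Nk k -> kMor L) :=
  [/\ (forall p q, ~~ nkle p q -> x p q = x p p),
      (forall p, x p p = kid (kr (x p p))),
      (forall p q, nkle p q ->
         x p p = kid (kr (x p q)) /\ x q q = kid (ks (x p q))),
      (forall p q, nkle p q -> kd (x p q) = nksub q p) &
      (forall p q m, nkle p q -> nkle q m ->
         ks (x p q) = kr (x q m) /\ x p m = kcomp (x p q) (x q m))].

Record ipath := IPath { ipf :> Nk k -> Nk k -> kMor L; ipP : is_ipath ipf }.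

Definition ipr (x : ipath) : kObj L := kr (x nk0 nk0).
Definition seg (x : ipath) (n : Nk k) : kMor L := x nk0 n.

Lemma nkle_add2r (p q m : Nk k) : nkle (nkadd p m) (nkadd q m) = nkle p q.
Proof.
apply/forallP/forallP => H i; have := H i; by rewrite !ffunE leq_add2r.
Qed.

Lemma nksub_add2r (p q m : Nk k) : nksub (nkadd q m) (nkadd p m) = nksub q p.
Proof. by apply/ffunP => i; rewrite !ffunE subnDr. Qed.

Lemma ipshift_is_ipath (m : Nk k) (x : ipath) :
  is_ipath (fun p q => x (nkadd p m) (nkadd q m)).
Proof.
case: (ipP x) => H1 H2 H3 H4 H5; split.
- by move=> p q Hpq; apply: H1; rewrite nkle_add2r.
- by move=> p; apply: H2.
- by move=> p q Hpq; apply: H3; rewrite nkle_add2r.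
- by move=> p q Hpq; rewrite H4 ?nkle_add2r // nksub_add2r.
- by move=> p q r Hpq Hqr; apply: H5; rewrite nkle_add2r.
Qed.

Definition ipshift (m : Nk k) (x : ipath) : ipath :=
  IPath (ipshift_is_ipath m x).

(* lambda x : the unique y with y(0,d(lambda)) = lambda and
   sigma^{d(lambda)} y = x (exists and is unique when r(x) = s(lambda)) *)
Definition ipcat (l : kMor L) (x : ipath) : ipath :=
  epsilon (inhabits x)
    (fun y => seg y (kd l) = l /\ ipshift (kd l) y = x).

Definition cyl (l : kMor L) : set ipath := [set x | seg x (kd l) = l].
Definition ipborel : set (set ipath) :=
  <<s [set cyl l | l in [set: kMor L]] >>.

End KGraph.

Section Hilbert.
Local Open Scope complex_scope.
Variables (R : realType) (H : lmodType R[i]) (ip : H -> H -> R[i]).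

Definition nsq (v : H) : R := complex.Re (ip v v).

Definition is_hilbert :=
  [/\ (forall a u v w, ip (a *: u + v) w = a * ip u w + ip v w),
      (forall u v, ip u v = (ip v u)^*),
      (forall v, 0 <= ip v v),
      (forall v, ip v v = 0 -> v = 0) &
      (forall u : nat -> H,
         (forall e : R, 0 < e -> exists N, forall m n, (N <= m)%N -> (N <= n)%N ->
            nsq (u m - u n) < e) ->
         exists v, (fun n => nsq (u n - v)) @ \oo --> (0 : R))].

Definition vcvg (u : nat -> H) (v : H) := (fun n => nsq (u n - v)) @ \oo --> (0 : R).

Definition adjoint_of (T S : H -> H) := forall u v, ip (T u) v = ip u (S v).

Definition bounded_op (T : H -> H) :=
  (forall (a : R[i]) u v, T (a *: u + v) = a *: T u + T v) /\
  exists M : R, forall v, nsq (T v) <= M * nsq v.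

Definition is_proj (T : H -> H) := bounded_op T /\ T \o T = T /\ adjoint_of T T.

End Hilbert.

Section Rep.
Variables (k : nat) (L : kgraph k) (R : realType) (H : lmodType R[i])
  (ip : H -> H -> R[i]).

Definition is_representation (t ts : kMor L -> H -> H) :=
  [/\ (forall l, bounded_op ip (t l) /\ adjoint_of ip (t l) (ts l)),
      (forall v, is_proj ip (t (kid v))) /\
        (forall v w, v <> w -> t (kid v) \o t (kid w) = (fun=> 0)),
      (forall l m, ks l = kr m -> t l \o t m = t (kcomp l m)),
      (forall l, ts l \o t l = t (kid (ks l))) &
      (forall v n (s : seq (kMor L)), uniq s ->
         (forall l, l \in s <-> vLn v n l) ->
         forall h, t (kid v) h = \sum_(l <- s) t l (ts l h))].

Definition is_pvm (P : set (ipath L) -> H -> H) :=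
  [/\ (forall A, ipborel A -> is_proj ip (P A)),
      P set0 = (fun=> 0),
      P setT = id,
      (forall A B, ipborel A -> ipborel B -> P (A `&` B) = P A \o P B) &
      (forall A : nat -> set (ipath L), (forall n, ipborel (A n)) ->
         trivIset setT A ->
         forall h, vcvg ip (fun n => \sum_(i < n) P (A i) h) (P (\bigcup_n A n) h))].

Definition pvm_of_rep (t ts : kMor L -> H -> H) (P : set (ipath L) -> H -> H) :=
  is_pvm P /\ forall l, P (cyl l) = t l \o ts l.

(* purely atomic: the sum over Omega converges in the strong operator
   topology to Id, i.e. for each h the net of finite partial sums
   (indexed by finite subsets of Omega, here given as injective maps
   'I_n -> Omega, ordered by inclusion of ranges) converges to h. *)
Definition purely_atomic (P : set (ipath L) -> H -> H) :=
  exists Om : set (ipath L),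
    [/\ ipborel Om,
        P (~` Om) = (fun=> 0),
        (forall w, Om w -> P [set w] <> (fun=> 0)) &
        (forall h (e : R), 0 < e ->
           exists n0 (f0 : 'I_n0 -> ipath L), (forall i, Om (f0 i)) /\
           forall n (f : 'I_n -> ipath L), injective f -> (forall i, Om (f i)) ->
             (forall i0, exists i, f i = f0 i0) ->
             nsq ip (\sum_(i < n) P [set f i] h - h) < e)].

End Rep.

(* (a) The operator [Q = t_l P{w} t_l^*] is self-adjoint, and its range lies in
   every cylinder [Z((lw)(0, d(l) + q))]; pure atomicity then puts it in the
   range of [P{lw}], because [P{z}] annihilates it for every other atom [z].
   Symmetrically the range of [t_l^* P{lw} t_l] lies in every [Z(w(0, q))],
   hence in the range of [P{w}], which gives [P{lw} = Q P{lw}].  Two self-adjoint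
   operators each absorbing the other are equal.  The identity for
   [t_{w(0,n)}^* P{w} t_{w(0,n)}] is the first one for [l = w(0, n)] and
   [sigma^n w], since [w = w(0, n) sigma^n(w)] and [t_l^* t_l = t_{s(l)}] acts
   as the identity on atoms below [s(l)].
   (b) [P{w}] lies below [P(Z(w(0, n)))], [t_e t_e^* = P(Z(e))], and the two
   cylinders are disjoint. *)

From Pilot Require Import Defs.
From mathcomp Require Import all_boot all_algebra.
From mathcomp Require Import all_classical all_reals all_analysis.
From mathcomp Require Import complex.
From Stdlib Require Import ClassicalEpsilon.
(* Shadows the kernel composition [kcomp] of mathcomp-analysis. *)
Import Defs.
Import order.Order.TTheory GRing.Theory Num.Theory.
Set Implicit Arguments.
Unset Strict Implicit.
Unset Printing Implicit Defensive.
Local Open Scope classical_set_scope.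
Local Open Scope ring_scope.

Section NkArith.
Variable k : nat.
Implicit Types p q m : Nk k.

Lemma nkaddC p q : nkadd p q = nkadd q p.
Proof. by apply/ffunP => i; rewrite !ffunE addnC. Qed.

Lemma nkadd0l p : nkadd nk0 p = p.
Proof. by apply/ffunP => i; rewrite !ffunE add0n. Qed.

Lemma nkadd0r p : nkadd p nk0 = p.
Proof. by apply/ffunP => i; rewrite !ffunE addn0. Qed.

Lemma nksub0 p : nksub p nk0 = p.
Proof. by apply/ffunP => i; rewrite !ffunE subn0. Qed.

Lemma nksubnn p : nksub p p = nk0.
Proof. by apply/ffunP => i; rewrite !ffunE subnn. Qed.

Lemma nkadd_subK p q : nkle p q -> nkadd p (nksub q p) = q.
Proof. by move=> /forallP le_pq; apply/ffunP => i; rewrite !ffunE subnKC. Qed.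

Lemma nkaddI p : injective (@nkadd k p).
Proof.
move=> q m /ffunP eq_pqm; apply/ffunP => i.
by have := eq_pqm i; rewrite !ffunE => /addnI.
Qed.

Lemma nkle_refl p : nkle p p.
Proof. exact/forallP. Qed.

Lemma nkle0 p : nkle nk0 p.
Proof. by apply/forallP => i; rewrite ffunE. Qed.

Lemma nkle_addr p q : nkle p (nkadd p q).
Proof. by apply/forallP => i; rewrite ffunE leq_addr. Qed.

Lemma nkle_addl p q : nkle p (nkadd q p).
Proof. by rewrite nkaddC nkle_addr. Qed.

Lemma nkle_trans p q m : nkle p q -> nkle q m -> nkle p m.
Proof.
move=> /forallP le_pq /forallP le_qm; apply/forallP => i.
exact: leq_trans (le_pq i) (le_qm i).
Qed.

End NkArith.

Section Factorization.
Variables (k : nat) (L : kgraph k).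
Implicit Types (a b c : kMor L) (m n : Nk k).

Lemma kfactor_exists c m n : kd c = nkadd m n ->
  exists a b, [/\ ks a = kr b, c = kcomp a b, kd a = m & kd b = n].
Proof. by move=> /kfactor [[a b] [[/= ? ? ? ?] _]]; exists a; exists b. Qed.

Lemma kfactor_uniq a b a' b' : ks a = kr b -> ks a' = kr b' ->
  kcomp a b = kcomp a' b' -> kd a = kd a' -> a = a' /\ b = b'.
Proof.
move=> sab sab' eq_ab eq_da.
have eq_db : kd b = kd b'.
  by apply: (@nkaddI _ (kd a)); rewrite -kd_comp // eq_ab kd_comp // eq_da.
have [[a0 b0] [_ uniq_ab]] := kfactor (kd_comp sab).
have := uniq_ab (a', b') (And4 sab' eq_ab (esym eq_da) (esym eq_db)).
by rewrite (uniq_ab (a, b) (And4 sab erefl erefl erefl)) => -[].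
Qed.

Lemma kd_eq0 b : kd b = nk0 -> b = kid (kr b).
Proof.
move=> db0; have [] := @kfactor_uniq (kid (kr b)) b b (kid (ks b)).
- by rewrite ks_id.
- by rewrite kr_id.
- by rewrite kcomp_idl kcomp_idr.
- by rewrite kd_id db0.
by [].
Qed.

Definition kprefix a c := exists b, ks a = kr b /\ c = kcomp a b.

Lemma kprefix_comp a b : ks a = kr b -> kprefix a (kcomp a b).
Proof. by exists b. Qed.

Lemma kprefix_uniq a a' c : kprefix a c -> kprefix a' c -> kd a = kd a' -> a = a'.
Proof.
move=> [b [sab ->]] [b' [sab' eq_c]] eq_da.
by have [] := kfactor_uniq sab sab' eq_c eq_da.
Qed.

Lemma kprefix_exists c m : nkle m (kd c) -> exists2 a, kprefix a c & kd a = m.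
Proof.
move=> le_mc; have [a [b [sab -> ? _]]] := kfactor_exists (esym (nkadd_subK le_mc)).
by exists a => //; exists b.
Qed.

Lemma kprefix_trans a b c : kprefix a b -> kprefix b c -> kprefix a c.
Proof.
move=> [x [sax ->]] [y [sxy ->]]; rewrite ks_comp // in sxy.
by exists (kcomp x y); rewrite kr_comp // -kcompA.
Qed.

Lemma kprefix_compl a b c : ks a = kr b -> kprefix b c -> kprefix (kcomp a b) (kcomp a c).
Proof.
move=> sab [y [sby ->]]; exists y.
by rewrite ks_comp // kcompA // kr_comp.
Qed.

End Factorization.

Section InfinitePaths.
Variables (k : nat) (L : kgraph k).
Implicit Types (p q m n : Nk k) (w x y : ipath L).

Lemma ipath_offdiag x p q : ~~ nkle p q -> x p q = x p p.
Proof. by case: (ipP x) => offdiag _ _ _ _; apply: offdiag. Qed.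

Lemma ipath_diag x p : x p p = kid (kr (x p p)).
Proof. by case: (ipP x) => _ diag _ _ _; apply: diag. Qed.

Lemma ipath_ends x p q : nkle p q ->
  x p p = kid (kr (x p q)) /\ x q q = kid (ks (x p q)).
Proof. by case: (ipP x) => _ _ ends _ _; apply: ends. Qed.

Lemma ipath_kd x p q : nkle p q -> kd (x p q) = nksub q p.
Proof. by case: (ipP x) => _ _ _ dx _; apply: dx. Qed.

Lemma ipath_comp x p q m : nkle p q -> nkle q m ->
  ks (x p q) = kr (x q m) /\ x p m = kcomp (x p q) (x q m).
Proof. by case: (ipP x) => _ _ _ _ comp; apply: comp. Qed.

Lemma kd_seg x q : kd (seg x q) = q.
Proof. by rewrite /seg ipath_kd ?nkle0 // nksub0. Qed.

Lemma ipr_seg x q : ipr x = kr (seg x q).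
Proof. by rewrite /ipr /seg (proj1 (ipath_ends x (nkle0 q))) kr_id. Qed.

Lemma seg0 x : seg x nk0 = kid (ipr x).
Proof. exact: ipath_diag. Qed.

Lemma seg_split x p q : nkle p q ->
  ks (seg x p) = kr (x p q) /\ seg x q = kcomp (seg x p) (x p q).
Proof. by move=> le_pq; apply: ipath_comp => //; apply: nkle0. Qed.

Lemma kprefix_seg x p q : nkle p q -> kprefix (seg x p) (seg x q).
Proof. by move=> /(seg_split x) [s_pq ->]; apply: kprefix_comp. Qed.

Lemma seg_eq_prefix x y p q : nkle p q -> seg x q = seg y q -> seg x p = seg y p.
Proof.
move=> le_pq eq_q; apply: (kprefix_uniq (c := seg x q)); rewrite ?kd_seg //.
  exact: kprefix_seg.
by rewrite eq_q; apply: kprefix_seg.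
Qed.

Lemma ipath_eq x y : (forall q, seg x q = seg y q) -> x = y.
Proof.
move=> eq_seg.
have eq_le p q : nkle p q -> x p q = y p q.
  move=> le_pq; have [sx ex] := seg_split x le_pq; have [sy ey] := seg_split y le_pq.
  have eq_d : kd (seg x p) = kd (seg y p) by rewrite !kd_seg.
  by have [] := kfactor_uniq sx sy (etrans (esym ex) (etrans (eq_seg q) ey)) eq_d.
have eq_xy p q : x p q = y p q.
  have [/eq_le //|not_le] := boolP (nkle p q).
  by rewrite !(ipath_offdiag _ not_le) eq_le ?nkle_refl.
case: x y {eq_seg eq_le} eq_xy => fx px [fy py] /= eq_xy.
have eq_f : fx = fy by apply: funext => p; apply: funext; apply: eq_xy.
by subst fy; congr IPath; apply: Prop_irrelevance.
Qed.

Lemma ipr_shift m x : ipr (ipshift m x) = ks (seg x m).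
Proof. by rewrite /ipr /= nkadd0l (proj2 (ipath_ends x (nkle0 m))) kr_id. Qed.

Lemma seg_add x m q :
  ks (seg x m) = kr (seg (ipshift m x) q) /\
  seg x (nkadd m q) = kcomp (seg x m) (seg (ipshift m x) q).
Proof. by rewrite /seg /= nkadd0l [nkadd q m]nkaddC; apply: seg_split; apply: nkle_addr. Qed.

Lemma set1_sub_cyl_seg w n : [set w] `<=` cyl (seg w n).
Proof. by move=> _ ->; rewrite /cyl /= kd_seg. Qed.

Lemma set1_sub_cyl_id w : [set w] `<=` cyl (kid (ipr w)).
Proof. by rewrite -seg0; apply: set1_sub_cyl_seg. Qed.

Lemma cyl_seg_sub_cyl_id w q : cyl (seg w q) `<=` cyl (kid (ipr w)).
Proof. by move=> x; rewrite /cyl /= kd_id seg0 kd_seg (ipr_seg x q) (ipr_seg w q) => ->. Qed.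

End InfinitePaths.

Section CoherentFamily.
Variables (k : nat) (L : kgraph k) (g : Nk k -> kMor L).
Hypothesis kd_g : forall q, kd (g q) = q.
Hypothesis g_prefix : forall p q, nkle p q -> kprefix (g p) (g q).

(* At pairs with [~~ nkle p q] the value at [(p, p)] is repeated, as [is_ipath] demands. *)
Definition coherent_ipf (p q : Nk k) : kMor L :=
  epsilon (inhabits (g p))
    (fun b => ks (g p) = kr b /\ g (if nkle p q then q else p) = kcomp (g p) b).

Lemma coherent_ipf_split p q : nkle p q ->
  ks (g p) = kr (coherent_ipf p q) /\ g q = kcomp (g p) (coherent_ipf p q).
Proof.
move=> le_pq; rewrite /coherent_ipf le_pq.
by apply: (epsilon_spec _ (fun b => ks (g p) = kr b /\ g q = kcomp (g p) b)); apply: g_prefix.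
Qed.

Lemma coherent_ipf_kd p q : nkle p q -> kd (coherent_ipf p q) = nksub q p.
Proof.
move=> le_pq; have [s_pq e_pq] := coherent_ipf_split le_pq.
apply: (@nkaddI _ p); rewrite nkadd_subK // -{1}(kd_g p) -kd_comp // -e_pq.
exact: kd_g.
Qed.

Lemma coherent_ipf_diag p : coherent_ipf p p = kid (ks (g p)).
Proof.
have [-> _] := coherent_ipf_split (nkle_refl p).
by apply: kd_eq0; rewrite coherent_ipf_kd ?nkle_refl // nksubnn.
Qed.

Lemma coherent_ipf_is_ipath : is_ipath coherent_ipf.
Proof.
split.
- by move=> p q not_le; rewrite /coherent_ipf (negbTE not_le) nkle_refl.
- by move=> p; rewrite coherent_ipf_diag kr_id.
- move=> p q le_pq; have [s_pq e_pq] := coherent_ipf_split le_pq.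
  by rewrite !coherent_ipf_diag -s_pq e_pq ks_comp.
- exact: coherent_ipf_kd.
move=> p q m le_pq le_qm; have le_pm := nkle_trans le_pq le_qm.
have [s_pq e_pq] := coherent_ipf_split le_pq.
have [s_qm e_qm] := coherent_ipf_split le_qm.
have [s_pm e_pm] := coherent_ipf_split le_pm.
have s_pqm : ks (coherent_ipf p q) = kr (coherent_ipf q m) by rewrite -s_qm e_pq ks_comp.
split=> //.
have s_p_qm : ks (g p) = kr (kcomp (coherent_ipf p q) (coherent_ipf q m)) by rewrite kr_comp.
have eq_pm : kcomp (g p) (coherent_ipf p m) =
              kcomp (g p) (kcomp (coherent_ipf p q) (coherent_ipf q m)).
  by rewrite -e_pm e_qm e_pq kcompA.
by have [] := kfactor_uniq s_pm s_p_qm eq_pm erefl.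
Qed.

Lemma exists_ipath_coherent : exists x : ipath L, forall q, seg x q = g q.
Proof.
exists (IPath coherent_ipf_is_ipath) => q; rewrite /seg /=.
have [s_0q e_0q] := coherent_ipf_split (nkle0 q).
have g0 : g nk0 = kid (kr (coherent_ipf nk0 q)).
  by rewrite -s_0q (kd_eq0 (kd_g nk0)) ks_id.
by rewrite [RHS]e_0q g0 kcomp_idl.
Qed.

End CoherentFamily.

Section Concatenation.
Variables (k : nat) (L : kgraph k).
Implicit Types (n q : Nk k) (x y : ipath L) (l : kMor L).

Definition is_ipcat l x y := seg y (kd l) = l /\ ipshift (kd l) y = x.

Lemma is_ipcat_uniq l x y y' : is_ipcat l x y -> is_ipcat l x y' -> y = y'.
Proof.
move=> [seg_y shift_y] [seg_y' shift_y']; apply: ipath_eq => q.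
apply: (@seg_eq_prefix _ _ _ _ q (nkadd (kd l) q)); first exact: nkle_addl.
have [_ ->] := seg_add y (kd l) q; have [_ ->] := seg_add y' (kd l) q.
by rewrite seg_y seg_y' shift_y shift_y'.
Qed.

(* [y(0, q)] is the degree-[q] prefix of [l x(0, q)]; these prefixes are coherent. *)
Lemma exists_ipcat l x : ipr x = ks l -> exists y, is_ipcat l x y.
Proof.
move=> r_x; have s_l q : ks l = kr (seg x q) by rewrite -r_x (ipr_seg x q).
have lx_kd q : kd (kcomp l (seg x q)) = nkadd (kd l) q by rewrite kd_comp // kd_seg.
have lx_prefix p q : nkle p q -> kprefix (kcomp l (seg x p)) (kcomp l (seg x q)).
  by move=> le_pq; apply: kprefix_compl => //; apply: kprefix_seg.
have g_ex q : exists a, kprefix a (kcomp l (seg x q)) /\ kd a = q.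
  have [|a ? ?] := @kprefix_exists _ _ (kcomp l (seg x q)) q; last by exists a.
  by rewrite lx_kd nkle_addl.
have [g g_spec] := boolp.choice g_ex.
have kd_g q : kd (g q) = q by case: (g_spec q).
have g_prefix p q : nkle p q -> kprefix (g p) (g q).
  move=> le_pq; have [|a pre_a kd_a] := @kprefix_exists _ _ (g q) p; first by rewrite kd_g.
  have -> // : g p = a.
  apply: (@kprefix_uniq _ _ _ _ (kcomp l (seg x q))); last by rewrite kd_g.
    exact: kprefix_trans (proj1 (g_spec p)) (lx_prefix _ _ le_pq).
  exact: kprefix_trans pre_a (proj1 (g_spec q)).
have [y seg_y] := exists_ipath_coherent kd_g g_prefix.
have g_lq q : g (nkadd (kd l) q) = kcomp l (seg x q).
  apply: (@kprefix_uniq _ _ _ _ (kcomp l (seg x (nkadd (kd l) q)))).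
  - exact: (proj1 (g_spec _)).
  - exact: lx_prefix (nkle_addl _ _).
  by rewrite kd_g lx_kd.
have y_l : seg y (kd l) = l.
  by rewrite seg_y -[kd l]nkadd0r g_lq seg0 r_x kcomp_idr.
exists y; split=> //; apply: ipath_eq => q.
have [s_yq e_yq] := seg_add y (kd l) q; rewrite y_l in s_yq e_yq.
have eq_lq : kcomp l (seg (ipshift (kd l) y) q) = kcomp l (seg x q).
  by rewrite -e_yq seg_y g_lq.
by have [] := kfactor_uniq s_yq (s_l q) eq_lq erefl.
Qed.

Lemma ipcatP l x : ipr x = ks l -> is_ipcat l x (ipcat l x).
Proof. by move=> /exists_ipcat; apply: epsilon_spec. Qed.

Lemma seg_ipcat l x q : ipr x = ks l ->
  seg (ipcat l x) (nkadd (kd l) q) = kcomp l (seg x q).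
Proof.
move=> /ipcatP [seg_y shift_y].
by have [_ ->] := seg_add (ipcat l x) (kd l) q; rewrite seg_y shift_y.
Qed.

Lemma ipcat_seg_shift x n : ipcat (seg x n) (ipshift n x) = x.
Proof.
apply: (is_ipcat_uniq (ipcatP (ipr_shift n x))).
by rewrite /is_ipcat kd_seg.
Qed.

End Concatenation.

Section BorelSets.
Variables (k : nat) (L : kgraph k).

Lemma cyl_borel (l : kMor L) : ipborel (cyl l).
Proof. by apply: sub_sigma_algebra; exists l. Qed.

Lemma borel_setC (A : set (ipath L)) : ipborel A -> ipborel (~` A).
Proof. by move=> /sigma_algebraCD; rewrite setTD. Qed.

(* [{x}] is the countable intersection of the cylinders [Z(x(0, q))]. *)
Lemma set1_borel (x : ipath L) : ipborel [set x].
Proof.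
pose B j := if (unpickle j : option (Nk k)) is Some q then ~` cyl (seg x q) else set0.
have -> : [set x] = ~` \bigcup_j B j.
  apply/seteqP; split=> [y -> [j _]|y not_B]; rewrite /B.
    by case: unpickle => [q|] //=; apply; rewrite /cyl /= kd_seg.
  apply: ipath_eq => q; apply: contrapT => neq_q; apply: not_B.
  by exists (pickle q) => //; rewrite /B pickleK /cyl /= kd_seg.
apply: borel_setC; apply: sigma_algebra_bigcup => j; rewrite /B.
case: unpickle => [q|]; [apply: borel_setC; exact: cyl_borel | exact: sigma_algebra0].
Qed.

End BorelSets.

#[local] Hint Resolve cyl_borel set1_borel : core.

Section InnerProduct.
Variables (R : realType) (H : lmodType R[i]) (ip : H -> H -> R[i]).
Hypothesis hH : is_hilbert ip.

Lemma ip_linear a u v w : ip (a *: u + v) w = a * ip u w + ip v w.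
Proof. by case: hH => ipL _ _ _ _; apply: ipL. Qed.

Lemma ip_conj u v : ip u v = conjc (ip v u).
Proof. by case: hH => _ ipC _ _ _; apply: ipC. Qed.

Lemma ip_ge0 v : 0 <= ip v v.
Proof. by case: hH => _ _ ge0 _ _; apply: ge0. Qed.

Lemma ip_eq0 v : ip v v = 0 -> v = 0.
Proof. by case: hH => _ _ _ eq0 _; apply: eq0. Qed.

Lemma ip0l w : ip 0 w = 0.
Proof. by have := ip_linear (-1) 0 0 w; rewrite scaler0 addr0 mulN1r addNr. Qed.

Lemma ipBr u v w : ip u (v - w) = ip u v - ip u w.
Proof.
rewrite ip_conj (ip_conj u v) (ip_conj u w) -rmorphB; congr conjc.
by rewrite -scaleN1r [v + _]addrC ip_linear mulN1r addrC.
Qed.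

Lemma nsq_small_eq0 v : (forall e : R, 0 < e -> nsq ip v < e) -> v = 0.
Proof.
move=> small; apply: ip_eq0; have := ip_ge0 v; rewrite lecE /= => /andP [/eqP im0 re_ge0].
have re0 : complex.Re (ip v v) = 0.
  apply/eqP; rewrite eq_le re_ge0 andbT leNgt; apply/negP => re_gt0.
  by have := small _ re_gt0; rewrite ltxx.
by move: im0 re0; case: (ip v v) => a b /= -> ->.
Qed.

Lemma adjoint_sym T S : adjoint_of ip T S -> adjoint_of ip S T.
Proof. by move=> adjTS u v; rewrite ip_conj -adjTS -ip_conj. Qed.

Lemma adjoint_uniq T S S' : adjoint_of ip T S -> adjoint_of ip T S' -> S = S'.
Proof.
move=> adjS adjS'; apply: funext => v; apply/eqP; rewrite -subr_eq0; apply/eqP.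
by apply: ip_eq0; rewrite ipBr -adjS -adjS' subrr.
Qed.

Lemma adjoint_comp A A' B B' : adjoint_of ip A A' -> adjoint_of ip B B' ->
  adjoint_of ip (A \o B) (B' \o A').
Proof. by move=> adjA adjB u v /=; rewrite adjA adjB. Qed.

Lemma adjoint_map0 T S : adjoint_of ip T S -> S 0 = 0.
Proof. by move=> /adjoint_sym adjST; apply: ip_eq0; rewrite adjST ip0l. Qed.

(* [A = A^* = (B A)^* = A B = B]. *)
Lemma selfadjoint_eq A B : adjoint_of ip A A -> adjoint_of ip B B ->
  A = B \o A -> B = A \o B -> A = B.
Proof.
move=> adjA adjB A_BA B_AB; rewrite B_AB; apply: (adjoint_uniq adjA).
by rewrite {1}A_BA; apply: adjoint_comp adjB adjA.
Qed.

End InnerProduct.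

Section Representation.
Variables (k : nat) (L : kgraph k) (R : realType) (H : lmodType R[i])
  (ip : H -> H -> R[i]) (t ts : kMor L -> H -> H) (P : set (ipath L) -> H -> H).
Hypotheses (hH : is_hilbert ip) (hrep : is_representation ip t ts)
  (hpvm : pvm_of_rep ip t ts P).
Implicit Types (e l m : kMor L) (n q : Nk k) (w z : ipath L) (A B : set (ipath L)) (h : H).

Lemma t_adjoint l : adjoint_of ip (t l) (ts l).
Proof. by case: hrep => bounded _ _ _ _; case: (bounded l). Qed.

Lemma t_id_proj v : is_proj ip (t (kid v)).
Proof. by case: hrep => _ [proj _] _ _ _; apply: proj. Qed.

Lemma t_comp l m h : ks l = kr m -> t l (t m h) = t (kcomp l m) h.
Proof. by case: hrep => _ _ ck2 _ _ /ck2 <-. Qed.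

Lemma ts_t l h : ts l (t l h) = t (kid (ks l)) h.
Proof. by case: hrep => _ _ _ ck3 _; rewrite -ck3. Qed.

Lemma ts_comp l m h : ks l = kr m -> ts (kcomp l m) h = ts m (ts l h).
Proof.
move=> s_lm; suff -> : ts (kcomp l m) = ts m \o ts l by [].
apply: (adjoint_uniq hH (t_adjoint _)).
have -> : t (kcomp l m) = t l \o t m by apply: funext => h'; rewrite /= t_comp.
exact: adjoint_comp (t_adjoint l) (t_adjoint m).
Qed.

Lemma ts_zero l : ts l 0 = 0.
Proof. exact: adjoint_map0 (t_adjoint l). Qed.

Lemma P_cyl l h : P (cyl l) h = t l (ts l h).
Proof. by case: hpvm => _ ->. Qed.

Lemma P_cyl_id v h : P (cyl (kid v)) h = t (kid v) h.
Proof.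
have [_ [idem t_sa]] := t_id_proj v.
have ts_id : ts (kid v) = t (kid v) := adjoint_uniq hH (t_adjoint _) t_sa.
by rewrite P_cyl ts_id -[LHS]/((t (kid v) \o t (kid v)) h) idem.
Qed.

Lemma P_selfadjoint A : ipborel A -> adjoint_of ip (P A) (P A).
Proof. by case: hpvm => [[proj _ _ _ _] _] /proj [_ []]. Qed.

Lemma P_zero A : ipborel A -> P A 0 = 0.
Proof. by move=> /P_selfadjoint /adjoint_map0; apply. Qed.

Lemma P_setI A B h : ipborel A -> ipborel B -> P (A `&` B) h = P A (P B h).
Proof. by case: hpvm => [[_ _ _ setI _] _] bA bB; rewrite setI. Qed.

Lemma P_sub_absorbl A B h : A `<=` B -> ipborel A -> ipborel B -> P B (P A h) = P A h.
Proof. by move=> AB bA bB; rewrite -P_setI // setIidr. Qed.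

Lemma P_sub_absorbr A B h : A `<=` B -> ipborel A -> ipborel B -> P A (P B h) = P A h.
Proof. by move=> AB bA bB; rewrite -P_setI // setIidl. Qed.

Lemma P_disj A B h : A `&` B = set0 -> ipborel A -> ipborel B -> P A (P B h) = 0.
Proof. by case: hpvm => [[_ P0 _ _ _] _] AB bA bB; rewrite -P_setI // AB P0. Qed.

Lemma ts_set1_t_other n e w :
  kd e = n -> e <> seg w n -> ts e \o P [set w] \o t e = (fun=> 0).
Proof.
move=> kd_e neq_e; apply: funext => h /=.
have t_e : t e h = P (cyl e) (t e h).
  by rewrite P_cyl ts_t t_comp ?kr_id // kcomp_idr.
have disj : cyl (seg w n) `&` cyl e = set0.
  apply/seteqP; split=> // x [/= seg_n seg_e]; apply: neq_e.
  by rewrite -seg_e -seg_n kd_seg kd_e.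
rewrite t_e -(P_sub_absorbr _ (set1_sub_cyl_seg (w := w) n)) // (P_disj _ disj) //.
by rewrite P_zero // ts_zero.
Qed.

Section PurelyAtomic.
Hypothesis hatom : purely_atomic ip P.

(* Test [g - P{w} g] against a finite partial sum of [P{z}] over distinct atoms
   [z] covering the given ones; only the term [z = w] survives. *)
Lemma set1_absorb w g : (forall z, z <> w -> P [set z] g = 0) -> P [set w] g = g.
Proof.
move=> Pz0; have [Om [bOm P_notOm _ approx]] := hatom.
apply/eqP; rewrite -subr_eq0; apply/eqP/(nsq_small_eq0 hH) => e e_gt0.
have [n0 [f0 [Om_f0 approx_f0]]] := approx g e e_gt0.
pose x0 : {classic ipath L} := w.
pose s0 := x0 :: [seq (f0 i : {classic ipath L}) | i <- enum 'I_n0].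
pose s := undup [seq z : {classic ipath L} <- s0 | `[< Om z >]].
have mem_s (z : {classic ipath L}) : (z \in s) = `[< Om z >] && (z \in s0).
  by rewrite mem_undup mem_filter.
pose f (i : 'I_(size s)) : ipath L := nth x0 s i.
have f_inj : injective f.
  move=> i j f_ij; apply: val_inj; apply/eqP.
  by rewrite -(nth_uniq x0 (s := s)) ?undup_uniq ?ltn_ord //; exact/eqP.
have Om_f i : Om (f i).
  by have := mem_nth x0 (ltn_ord i); rewrite mem_s => /andP [/asboolP].
have f_cover i0 : exists i, f i = f0 i0.
  have f0_s : f0 i0 \in s.
    rewrite mem_s inE (map_f (fun i => f0 i : {classic ipath L})) ?mem_enum ?orbT ?andbT //.
    exact/asboolP.
  by exists (Ordinal (etrans (index_mem _ _) f0_s)); rewrite /f nth_index.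
suff <- : \sum_(z <- s) P [set z] g = P [set w] g.
  by rewrite (big_nth x0) big_mkord; apply: approx_f0.
have [w_s|w_notin_s] := boolP (x0 \in s).
  rewrite (bigD1_seq x0) ?undup_uniq //= big1 ?addr0 // => z /eqP neq_zw.
  exact: Pz0.
rewrite big1_seq => [|z /andP [_ z_s]]; last first.
  by apply: Pz0 => eq_zw; move: w_notin_s; rewrite /x0 -eq_zw z_s.
have notOm_w : [set w] `<=` ~` Om.
  by move=> _ -> Om_w; move: w_notin_s; rewrite mem_s inE eqxx asboolT.
by rewrite -(P_sub_absorbr g notOm_w) ?P_notOm ?P_zero //; apply: borel_setC.
Qed.

Lemma set1_absorb_cyl w n g :
  (forall q, P (cyl (seg w (nkadd n q))) g = g) -> P [set w] g = g.
Proof.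
move=> cyl_g; apply: set1_absorb => z neq_zw.
have [q neq_q] : exists q, seg z q <> seg w q.
  apply: contrapT => all_eq; apply/neq_zw/ipath_eq => q.
  by apply: contrapT => ?; apply: all_eq; exists q.
rewrite -(cyl_g q) P_disj //; apply/seteqP; split=> // _ [-> /= eq_seg]; apply: neq_q.
by apply: (seg_eq_prefix (nkle_addl q n)); rewrite -[RHS]eq_seg kd_seg.
Qed.

Lemma P_cyl_ipcat l w q h : ipr w = ks l ->
  P (cyl (seg (ipcat l w) (nkadd (kd l) q))) h = t l (P (cyl (seg w q)) (ts l h)).
Proof.
move=> r_w; have s_l : ks l = kr (seg w q) by rewrite -r_w (ipr_seg w q).
by rewrite seg_ipcat // !P_cyl ts_comp // t_comp.
Qed.

Lemma t_set1_ts_absorb l w h : ipr w = ks l ->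
  P [set ipcat l w] (t l (P [set w] (ts l h))) = t l (P [set w] (ts l h)).
Proof.
move=> r_w; apply: (set1_absorb_cyl (n := kd l)) => q.
rewrite P_cyl_ipcat // ts_t -r_w -P_cyl_id (P_sub_absorbl _ (set1_sub_cyl_id (w := w))) //.
by rewrite P_sub_absorbl //; apply: set1_sub_cyl_seg.
Qed.

Lemma ts_set1_t_absorb l w h : ipr w = ks l ->
  P [set w] (ts l (P [set ipcat l w] (t l h))) = ts l (P [set ipcat l w] (t l h)).
Proof.
move=> r_w; apply: (set1_absorb_cyl (n := nk0)) => q; rewrite nkadd0l.
rewrite -{2}(P_sub_absorbl _ (set1_sub_cyl_seg (w := ipcat l w) (nkadd (kd l) q))) //.
rewrite P_cyl_ipcat // ts_t -r_w -P_cyl_id.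
by rewrite (P_sub_absorbl _ (cyl_seg_sub_cyl_id (w := w) (q := q))).
Qed.

Lemma t_set1_ts l w : ipr w = ks l -> t l \o P [set w] \o ts l = P [set ipcat l w].
Proof.
move=> r_w; set y := ipcat l w.
have y_l : [set y] `<=` cyl l by move=> _ ->; rewrite /cyl /=; have [] := ipcatP r_w.
have y_Qy h : P [set y] h = t l (P [set w] (ts l (P [set y] h))).
  have P_y_cyl : P [set y] (t l (ts l h)) = P [set y] h.
    by rewrite -P_cyl (P_sub_absorbr _ y_l).
  by rewrite -{1}(P_sub_absorbl h y_l) // -P_y_cyl P_cyl ts_set1_t_absorb.
apply: (selfadjoint_eq hH).
- move=> u v /=.
  by rewrite t_adjoint (P_selfadjoint (set1_borel w)) (adjoint_sym hH (t_adjoint l)).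
- exact: P_selfadjoint.
- by apply: funext => h /=; rewrite t_set1_ts_absorb.
- by apply: funext => h /=; rewrite -y_Qy.
Qed.

Lemma ts_set1_t_seg w n :
  ts (seg w n) \o P [set w] \o t (seg w n) = P [set ipshift n w].
Proof.
have r_w' := ipr_shift n w.
have := t_set1_ts r_w'; rewrite ipcat_seg_shift => <-.
have w'_sub := set1_sub_cyl_id (w := ipshift n w).
apply: funext => h /=; rewrite !ts_t -!P_cyl_id -r_w'.
by rewrite (P_sub_absorbr _ w'_sub) ?(P_sub_absorbl _ w'_sub).
Qed.

End PurelyAtomic.
End Representation.

Theorem proposition3p3 (k : nat) (L : kgraph k)
  (R : realType) (H : lmodType R[i]) (ip : H -> H -> R[i])
  (t ts : kMor L -> H -> H) (P : set (ipath L) -> H -> H) :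
  is_hilbert ip ->
  row_finite L -> no_sources L ->
  is_representation ip t ts ->
  pvm_of_rep ip t ts P ->
  purely_atomic ip P ->
  ((forall (l : kMor L) (w : ipath L), ipr w = ks l ->
      t l \o P [set w] \o ts l = P [set ipcat l w]) /\
   (forall (w : ipath L) (n : Nk k),
      ts (seg w n) \o P [set w] \o t (seg w n) = P [set ipshift n w])) /\
  (forall (n : Nk k) (e : kMor L) (w : ipath L), kd e = n -> e <> seg w n ->
      ts e \o P [set w] \o t e = (fun=> 0)).
Proof.
move=> hH _ _ hrep hpvm hatom; split; first split.
- exact: (t_set1_ts hH hrep hpvm hatom).
- exact: (ts_set1_t_seg hH hrep hpvm hatom).
- exact: (ts_set1_t_other hH hrep hpvm).
Qed.
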